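(* For every $\varepsilon>0$, positive integer $t$, threshold $\theta\in\mathbb{R}$ and finite sequence $Q$ of counting queries, ImprovedSVT$(\cdot,Q,\theta,\lambda,t)$ (described below) satisfies $\varepsilon$-differential privacy whenever $\lambda\ge 2/\varepsilon$.
   Context: $\mathrm{Lap}(\lambda)$ is the Laplace distribution with density $\frac{1}{2\lambda}e^{-|y|/\lambda}$. A dataset is a finite multiset of tuples; two datasets are neighboring if one is obtained by inserting one tuple into the other. A counting query $q$ maps a dataset to the number of its tuples satisfying some predicate (so if $D$ is $D'$ plus one tuple then $q(D')\le q(D)\le q(D')+1$). ImprovedSVT$(D,Q=(q_1,q_2,\dots),\theta,\lambda,t)$: set $cnt=0$; draw $\hat\theta=\theta+\mathrm{Lap}(\lambda)$ once; for $i=1,2,\dots$: draw $\hat q_i(D)=q_i(D)+\mathrm{Lap}(t\lambda)$ (all noises independent); if $\hat q_i(D)>\hat\theta$, output $o_i=1$, increase $cnt$ by one, and stop if $cnt\ge t$; otherwise output $o_i=0$. The algorithm also stops when $Q$ is exhausted. The output is the sequence $(o_1,o_2,\dots)$ produced. An algorithm $\mathcal{A}$ is $\varepsilon$-differentially private if for all neighboring $D,D'$ and all outputs $O$, $\Pr[\mathcal{A}(D)=O]\le e^{\varepsilon}\Pr[\mathcal{A}(D')=O]$. *)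

From Stdlib Require Import Reals Lra List Permutation.
Open Scope R_scope.

Definition lap_pdf (b y : R) : R := / (2 * b) * exp (- Rabs y / b).

(* Pr[Lap(b) > x] = \int_x^oo lap_pdf b (closed form). *)
Definition lap_tail (b x : R) : R :=
  if Rlt_dec x 0 then 1 - exp (x / b) / 2 else exp (- x / b) / 2.

Definition improper_integral (f : R -> R) (l : R) : Prop :=
  forall e, 0 < e -> exists M, forall a b, a <= - M -> M <= b ->
    exists pr : Riemann_integrable f a b, Rabs (RiemannInt pr - l) < e.

(* Probability that ImprovedSVT produces exactly the output sequence [o],
   conditioned on the noisy threshold being [x]; [qs] are the true query
   answers q_i(D), [c] is the current counter. *)
Fixpoint svt_cond_prob (t : nat) (lam : R) (qs : list R) (x : R) (c : nat)
  (o : list bool) : R :=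
  match qs, o with
  | nil, nil => 1
  | nil, cons _ _ => 0
  | cons _ _, nil => 0
  | cons q qs', cons b o' =>
      let p1 := lap_tail (INR t * lam) (x - q) in
      if b then
        p1 * (if Nat.leb t (S c) then
                (match o' with nil => 1 | cons _ _ => 0 end)
              else svt_cond_prob t lam qs' x (S c) o')
      else (1 - p1) * svt_cond_prob t lam qs' x c o'
  end.

(* Datasets: finite multisets of tuples of type T, represented as lists. *)
Definition neighboring {T : Type} (D D' : list T) : Prop :=
  (exists x, Permutation D (x :: D')) \/ (exists x, Permutation D' (x :: D)).

Definition counting_query {T : Type} (p : T -> bool) (D : list T) : R :=
  INR (length (filter p D)).

(* [pr] is Pr[ImprovedSVT(D,Q,theta,lam,t) = o]: integrate over the threshold
   noise z ~ Lap(lam), hat theta = theta + z. *)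
Definition svt_prob {T : Type} (D : list T) (Q : list (T -> bool))
  (theta lam : R) (t : nat) (o : list bool) (pr : R) : Prop :=
  improper_integral
    (fun z => lap_pdf lam z *
       svt_cond_prob t lam (map (fun p => counting_query p D) Q) (theta + z) 0 o)
    pr.

Definition svt_dp {T : Type} (Q : list (T -> bool)) (theta lam : R) (t : nat)
  (eps : R) : Prop :=
  forall D D' : list T, neighboring D D' -> forall o : list bool,
    exists p1 p2, svt_prob D Q theta lam t o p1 /\ svt_prob D' Q theta lam t o p2
      /\ p1 <= exp eps * p2.

From Stdlib Require Import Reals Lra Lia List Permutation Classical.
From Coquelicot Require Import Coquelicot.
Open Scope R_scope.

(* Condition on the threshold noise z.  For neighbouring D, D' every counting query moves by at
   most 1, so comparing D at noise z with D' at noise z + s, where s = 1 if D' is the larger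
   dataset and s = 0 otherwise, each gap (threshold - answer) on D lies within 1 below the
   corresponding gap on D'.  Given the threshold, a positive answer is then at most
   e^(1/(t lam)) times likelier on D and a negative answer no likelier; as at most t answers
   are positive, the conditional output probabilities differ by a factor e^(1/lam).  Shifting
   the Laplace threshold noise by s costs another e^(1/lam), and e^(2/lam) <= e^eps. *)

Lemma exp_le_exp x y : x <= y -> exp x <= exp y.
Proof. intros [Hlt | ->]; [left; apply exp_increasing |]; lra. Qed.

Lemma exp_ge_1 x : 0 <= x -> 1 <= exp x.
Proof. intros; pose proof (exp_ineq1_le x); lra. Qed.

Lemma exp_le_1 x : x <= 0 -> exp x <= 1.
Proof. intros; rewrite <- exp_0; apply exp_le_exp; lra. Qed.

Lemma Rdiv_le_mono x y b : 0 < b -> x <= y -> x / b <= y / b.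
Proof. intros; apply Rmult_le_compat_r; [left; apply Rinv_0_lt_compat|]; lra. Qed.

Lemma Rdiv_nonpos x b : 0 < b -> x <= 0 -> x / b <= 0.
Proof. intros; rewrite <- (Rdiv_0_l b); apply Rdiv_le_mono; lra. Qed.

Section LaplaceTail.

Variable b : R.
Hypothesis b_pos : 0 < b.

(* Gluing the two branches of [lap_tail] makes its continuity evident. *)
Lemma lap_tail_Rabs x : lap_tail b x =
  / 2 + exp (- ((x + Rabs x) / 2) / b) / 2 - exp (((x - Rabs x) / 2) / b) / 2.
Proof.
  unfold lap_tail; destruct (Rlt_dec x 0).
  - rewrite Rabs_left by lra.
    replace (- ((x + - x) / 2) / b) with 0 by (unfold Rdiv; ring).
    replace ((x - - x) / 2) with x by field.
    rewrite exp_0; lra.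
  - rewrite Rabs_right by lra.
    replace ((x - x) / 2 / b) with 0 by (unfold Rdiv; ring).
    replace (- ((x + x) / 2)) with (- x) by field.
    rewrite exp_0; lra.
Qed.

Lemma continuous_lap_tail x : continuous (lap_tail b) x.
Proof.
  apply (continuous_ext (fun x => / 2 + exp (- ((x + Rabs x) / 2) / b) / 2
                                   - exp (((x - Rabs x) / 2) / b) / 2)).
  { intros; symmetry; apply lap_tail_Rabs. }
  assert (Habs : continuous Rabs x) by apply continuous_Rabs_comp, continuous_id.
  apply (continuous_minus (V := R_NormedModule));
    [apply (continuous_plus (V := R_NormedModule)); [apply continuous_const |] |];
    apply (continuous_mult (K := R_AbsRing)); try apply continuous_const;
    apply continuous_exp_comp; apply (continuous_mult (K := R_AbsRing));
    try apply continuous_const.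
  - apply (continuous_opp (V := R_NormedModule)).
    apply (continuous_mult (K := R_AbsRing)); [| apply continuous_const].
    apply (continuous_plus (V := R_NormedModule)); [apply continuous_id | exact Habs].
  - apply (continuous_mult (K := R_AbsRing)); [| apply continuous_const].
    apply (continuous_minus (V := R_NormedModule)); [apply continuous_id | exact Habs].
Qed.

Lemma lap_tail_bounds x : 0 <= lap_tail b x <= 1.
Proof.
  unfold lap_tail; destruct (Rlt_dec x 0).
  - assert (exp (x / b) <= 1) by (apply exp_le_1, Rdiv_nonpos; lra).
    pose proof (exp_pos (x / b)); lra.
  - assert (exp (- x / b) <= 1) by (apply exp_le_1, Rdiv_nonpos; lra).
    pose proof (exp_pos (- x / b)); lra.
Qed.

Lemma lap_tail_antimono x y : x <= y -> lap_tail b y <= lap_tail b x.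
Proof.
  intros Hxy; unfold lap_tail; destruct (Rlt_dec x 0), (Rlt_dec y 0); try lra.
  - assert (exp (x / b) <= exp (y / b)) by (apply exp_le_exp, Rdiv_le_mono; lra). lra.
  - assert (exp (x / b) <= 1) by (apply exp_le_1, Rdiv_nonpos; lra).
    assert (exp (- y / b) <= 1) by (apply exp_le_1, Rdiv_nonpos; lra).
    lra.
  - assert (exp (- y / b) <= exp (- x / b)) by (apply exp_le_exp, Rdiv_le_mono; lra). lra.
Qed.

Lemma lap_tail_shift_le y s : 0 <= s -> lap_tail b (y - s) <= exp (s / b) * lap_tail b y.
Proof.
  intros Hs; set (K := exp (s / b)).
  assert (HK : 1 <= K) by (apply exp_ge_1, Rle_mult_inv_pos; lra).
  unfold lap_tail; destruct (Rlt_dec (y - s) 0), (Rlt_dec y 0); try lra.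
  - set (u := exp (y / b)).
    assert (Hu : 0 < u <= 1) by (split; [apply exp_pos | apply exp_le_1, Rdiv_nonpos; lra]).
    set (w := exp ((y - s) / b)).
    assert (w * K = u) by (unfold w, K, u; rewrite <- exp_plus; f_equal; field; lra).
    assert (0 < w) by apply exp_pos.
    assert (0 <= (K - 1) * (2 - u - w)) by (apply Rmult_le_pos; nra).
    nra.
  - set (v := exp ((s - y) / b)).
    assert (Hv : 1 <= v) by (apply exp_ge_1, Rle_mult_inv_pos; lra).
    assert (exp ((y - s) / b) * v = 1)
      by (unfold v; rewrite <- exp_plus, <- exp_0; f_equal; field; lra).
    assert (K * exp (- y / b) = v) by (unfold K, v; rewrite <- exp_plus; f_equal; field; lra).
    nra.
  - assert (K * exp (- y / b) = exp (- (y - s) / b))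
      by (unfold K; rewrite <- exp_plus; f_equal; field; lra).
    lra.
Qed.

End LaplaceTail.
Section LaplaceDensity.

Variable lam : R.
Hypothesis lam_pos : 0 < lam.

Lemma continuous_lap_pdf z : continuous (lap_pdf lam) z.
Proof.
  apply (continuous_mult (K := R_AbsRing) (fun _ => / (2 * lam))); [apply continuous_const |].
  apply continuous_exp_comp, (continuous_mult (K := R_AbsRing)); [| apply continuous_const].
  apply (continuous_opp (V := R_NormedModule)), continuous_Rabs_comp, continuous_id.
Qed.

Lemma lap_pdf_pos z : 0 < lap_pdf lam z.
Proof. apply Rmult_lt_0_compat; [apply Rinv_0_lt_compat; lra | apply exp_pos]. Qed.

Lemma lap_pdf_shift_le z s : lap_pdf lam z <= exp (Rabs s / lam) * lap_pdf lam (z + s).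
Proof.
  unfold lap_pdf.
  assert (0 < / (2 * lam)) by (apply Rinv_0_lt_compat; lra).
  assert (E : exp (Rabs s / lam) * exp (- Rabs (z + s) / lam)
              = exp ((Rabs s - Rabs (z + s)) / lam))
    by (rewrite <- exp_plus; f_equal; field; lra).
  assert (exp (- Rabs z / lam) <= exp ((Rabs s - Rabs (z + s)) / lam)).
  { apply exp_le_exp, Rdiv_le_mono; [lra |].
    pose proof (Rabs_triang z s); lra. }
  nra.
Qed.

Lemma is_RInt_lap_pdf_sym N : 0 <= N ->
  is_RInt (lap_pdf lam) (- N) N (1 - exp (- N / lam)).
Proof.
  intros HN.
  replace (1 - exp (- N / lam))
    with (plus (exp (0 / lam) / 2 - exp (- N / lam) / 2)
               (- exp (- N / lam) / 2 - - exp (- 0 / lam) / 2))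
    by (rewrite Ropp_0, Rdiv_0_l, exp_0; unfold plus; simpl; field).
  apply (is_RInt_Chasles (V := R_NormedModule)) with 0.
  - apply (is_RInt_derive (fun z => exp (z / lam) / 2)); [| intros; apply continuous_lap_pdf].
    intros x Hx; rewrite Rmin_left, Rmax_right in Hx by lra.
    unfold lap_pdf; rewrite Rabs_left1 by lra.
    auto_derive; [auto |]. rewrite Ropp_involutive; unfold Rdiv; field; lra.
  - apply (is_RInt_derive (fun z => - exp (- z / lam) / 2)); [| intros; apply continuous_lap_pdf].
    intros x Hx; rewrite Rmin_left, Rmax_right in Hx by lra.
    unfold lap_pdf; rewrite Rabs_right by lra.
    auto_derive; [auto |]. unfold Rdiv; field; lra.
Qed.

Lemma RInt_lap_pdf_sym_le_1 N : 0 <= N -> RInt (lap_pdf lam) (- N) N <= 1.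
Proof.
  intros HN; rewrite (is_RInt_unique _ _ _ _ (is_RInt_lap_pdf_sym N HN)).
  pose proof (exp_pos (- N / lam)); lra.
Qed.

End LaplaceDensity.

Lemma improper_integral_RInt f l :
  improper_integral f l <->
  forall e, 0 < e -> exists M, forall a b, a <= - M -> M <= b ->
    ex_RInt f a b /\ Rabs (RInt f a b - l) < e.
Proof.
  split; intros H e He; destruct (H e He) as [M HM]; exists M; intros a b Ha Hb.
  - destruct (HM a b Ha Hb) as [pr Hpr].
    rewrite (RInt_Reals f a b pr); split; [exact (ex_RInt_Reals_1 _ _ _ pr) | exact Hpr].
  - destruct (HM a b Ha Hb) as [Hex Hlt].
    exists (ex_RInt_Reals_0 _ _ _ Hex); rewrite <- RInt_Reals; exact Hlt.
Qed.

Lemma improper_integral_shift f l s :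
  improper_integral f l -> improper_integral (fun z => f (z + s)) l.
Proof.
  rewrite !improper_integral_RInt; intros H e He.
  destruct (H e He) as [M HM]; exists (M + Rabs s); intros a b Ha Hb.
  pose proof (Rle_abs s); pose proof (Rle_abs (- s)); rewrite Rabs_Ropp in *.
  destruct (HM (a + s) (b + s)) as [Hex Hlt]; [lra | lra |].
  assert (HI : is_RInt (fun z => f (z + s)) a b (RInt f (a + s) (b + s))).
  { apply (is_RInt_ext (V := R_NormedModule) (fun z => scal 1 (f (1 * z + s)))).
    - intros z _; change (scal 1 (f (1 * z + s))) with (1 * f (1 * z + s)).
      rewrite !Rmult_1_l; reflexivity.
    - apply (is_RInt_comp_lin (V := R_NormedModule)); rewrite !Rmult_1_l.
      exact (RInt_correct (V := R_CompleteNormedModule) _ _ _ Hex). }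
  split; [exists (RInt f (a + s) (b + s)); exact HI |].
  rewrite (is_RInt_unique (V := R_CompleteNormedModule) _ _ _ _ HI); exact Hlt.
Qed.

Lemma improper_integral_le f g l1 l2 C : 0 <= C ->
  improper_integral f l1 -> improper_integral g l2 ->
  (forall z, f z <= C * g z) -> l1 <= C * l2.
Proof.
  rewrite !improper_integral_RInt; intros HC Hf Hg Hfg.
  apply Rnot_lt_le; intros Hlt.
  set (e := (l1 - C * l2) / (2 * (C + 1))).
  assert (He : 0 < e) by (apply Rdiv_lt_0_compat; lra).
  destruct (Hf e He) as [M1 HM1], (Hg e He) as [M2 HM2].
  set (M := Rabs M1 + Rabs M2).
  pose proof (Rle_abs M1); pose proof (Rle_abs M2).
  pose proof (Rle_abs (- M1)); pose proof (Rle_abs (- M2)); rewrite !Rabs_Ropp in *.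
  destruct (HM1 (- M) M) as [Xf Hf1]; [unfold M; lra | unfold M; lra |].
  destruct (HM2 (- M) M) as [Xg Hg1]; [unfold M; lra | unfold M; lra |].
  assert (HI : RInt f (- M) M <= C * RInt g (- M) M).
  { change (C * RInt g (- M) M) with (scal C (RInt g (- M) M)).
    rewrite <- (RInt_scal (V := R_CompleteNormedModule) g _ _ C Xg).
    apply RInt_le; [unfold M; lra | exact Xf | | intros; apply Hfg].
    exact (ex_RInt_scal (V := R_NormedModule) _ _ _ C Xg). }
  apply Rabs_def2 in Hf1; apply Rabs_def2 in Hg1.
  assert (e * (2 * (C + 1)) = l1 - C * l2) by (unfold e; field; lra).
  nra.
Qed.

(* The limit is the supremum of the integrals over [-N, N], which increase with N. *)
Lemma improper_integral_nonneg_bounded f B :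
  (forall a b, ex_RInt f a b) -> (forall z, 0 <= f z) ->
  (forall N, 0 <= N -> RInt f (- N) N <= B) ->
  exists l, improper_integral f l.
Proof.
  intros Xf Hf0 HB.
  assert (Pos : forall a b, a <= b -> 0 <= RInt f a b) by (intros; apply RInt_ge_0; auto).
  assert (Ch : forall a b c, RInt f a c = RInt f a b + RInt f b c)
    by (intros a b c; symmetry;
        exact (RInt_Chasles (V := R_CompleteNormedModule) f a b c (Xf a b) (Xf b c))).
  set (E := fun y => exists N, 0 <= N /\ y = RInt f (- N) N).
  assert (HE : bound E) by (exists B; intros y [N [HN ->]]; auto).
  assert (HE0 : exists y, E y) by (exists (RInt f (- 0) 0), 0; split; [lra | reflexivity]).
  destruct (completeness E HE HE0) as [l [Hub Hlub]].
  exists l; apply improper_integral_RInt; intros e He.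
  destruct (classic (exists N, 0 <= N /\ l - e < RInt f (- N) N)) as [[N [HN HlN]] | Hno].
  2:{ exfalso. assert (l <= l - e) by (apply Hlub; intros y [N [HN ->]];
        apply Rnot_lt_le; intros C; apply Hno; exists N; auto). lra. }
  exists N; intros a b Ha Hb; split; [apply Xf |].
  set (N' := Rmax (- a) b).
  assert (- a <= N') by apply Rmax_l; assert (b <= N') by apply Rmax_r.
  assert (l - e < RInt f a b).
  { rewrite (Ch a (- N) b), (Ch (- N) N b).
    pose proof (Pos a (- N) Ha); pose proof (Pos N b Hb); lra. }
  assert (RInt f a b <= l).
  { apply Rle_trans with (RInt f (- N') N'); [| apply Hub; exists N'; split; [lra | reflexivity]].
    rewrite (Ch (- N') a N'), (Ch a b N').
    pose proof (Pos (- N') a ltac:(lra)); pose proof (Pos b N' ltac:(lra)); lra. }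
  apply Rabs_def1; lra.
Qed.

Lemma exp_pow x n : exp x ^ n = exp (INR n * x).
Proof.
  induction n as [| n IH]; cbn [pow]; [rewrite Rmult_0_l, exp_0; reflexivity |].
  rewrite IH, <- exp_plus, S_INR; f_equal; ring.
Qed.

Lemma Rmult_le_compat_factors a a' b b' A B C : 0 <= a -> 0 <= b -> 0 <= a' * b' ->
  a <= A * a' -> b <= B * b' -> A * B <= C -> a * b <= C * (a' * b').
Proof.
  intros Ha Hb Hab' Hla Hlb HAB.
  apply Rle_trans with ((A * a') * (B * b')); [apply Rmult_le_compat; lra |].
  replace (A * a' * (B * b')) with ((A * B) * (a' * b')) by ring.
  apply Rmult_le_compat_r; assumption.
Qed.

Section ConditionalOutputProbability.

Variables (t : nat) (lam : R).
Hypothesis tlam_pos : 0 < INR t * lam.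

Lemma continuous_svt_cond_prob qs c o x :
  continuous (fun x => svt_cond_prob t lam qs x c o) x.
Proof.
  assert (Htail : forall q x, continuous (fun x => lap_tail (INR t * lam) (x - q)) x).
  { intros q x'; apply (continuous_comp (fun x => x - q)); [| apply continuous_lap_tail].
    apply (continuous_minus (V := R_NormedModule)); [apply continuous_id | apply continuous_const]. }
  revert c o; induction qs as [| q qs IH]; intros c [| [|] o]; simpl;
    try apply continuous_const; apply (continuous_mult (K := R_AbsRing)).
  - apply Htail.
  - destruct (Nat.leb t (S c)); [apply continuous_const | apply IH].
  - apply (continuous_minus (V := R_NormedModule)); [apply continuous_const | apply Htail].
  - apply IH.
Qed.

Lemma svt_cond_prob_bounds qs x c o : 0 <= svt_cond_prob t lam qs x c o <= 1.
Proof.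
  revert c o; induction qs as [| q qs IH]; intros c [| [|] o]; simpl; try lra;
    pose proof (lap_tail_bounds _ tlam_pos (x - q)).
  - destruct (Nat.leb t (S c)); [destruct o |]; [nra | nra |].
    specialize (IH (S c) o); nra.
  - specialize (IH c o); nra.
Qed.

Lemma svt_cond_prob_le_pow x y qs1 qs2 :
  Forall2 (fun q1 q2 => y - q2 - 1 <= x - q1 <= y - q2) qs1 qs2 ->
  forall c o, (c < t)%nat ->
  svt_cond_prob t lam qs1 x c o
    <= exp (1 / (INR t * lam)) ^ (t - c) * svt_cond_prob t lam qs2 y c o.
Proof.
  set (K := exp (1 / (INR t * lam))).
  assert (HK : 1 <= K) by (apply exp_ge_1, Rle_mult_inv_pos; lra).
  assert (HKpow : forall n, 1 <= K ^ n) by (intros; apply pow_R1_Rle, HK).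
  induction 1 as [| q1 q2 qs1 qs2 [Hlo Hhi] _ IH]; intros c [| [|] o] Hc; simpl; try lra.
  - specialize (HKpow (t - c)%nat); lra.
  - assert (Ek : K ^ (t - c) = K * K ^ (t - S c))
      by (replace (t - c)%nat with (S (t - S c)) by lia; reflexivity).
    assert (Hrest : forall qs z, 0 <= (if Nat.leb t (S c)
        then match o with nil => 1 | _ :: _ => 0 end else svt_cond_prob t lam qs z (S c) o))
      by (intros; destruct (Nat.leb t (S c)); [destruct o; lra | apply svt_cond_prob_bounds]).
    rewrite Ek; apply (Rmult_le_compat_factors _ _ _ _ K (K ^ (t - S c))).
    + apply lap_tail_bounds, tlam_pos.
    + apply Hrest.
    + apply Rmult_le_pos; [apply lap_tail_bounds, tlam_pos | apply Hrest].
    + apply Rle_trans with (lap_tail (INR t * lam) (y - q2 - 1));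
        [apply lap_tail_antimono | apply lap_tail_shift_le]; lra.
    + destruct (Nat.leb t (S c)) eqn:Hstop.
      * specialize (HKpow (t - S c)%nat); destruct o; lra.
      * apply IH, Nat.leb_gt, Hstop.
    + lra.
  - rewrite <- (Rmult_1_l (K ^ (t - c))); apply (Rmult_le_compat_factors _ _ _ _ 1 (K ^ (t - c))).
    + pose proof (lap_tail_bounds _ tlam_pos (x - q1)); lra.
    + apply svt_cond_prob_bounds.
    + apply Rmult_le_pos; [| apply svt_cond_prob_bounds].
      pose proof (lap_tail_bounds _ tlam_pos (y - q2)); lra.
    + pose proof (lap_tail_antimono _ tlam_pos _ _ Hhi); lra.
    + apply IH, Hc.
    + lra.
Qed.

Lemma svt_cond_prob_le x y qs1 qs2 o :
  Forall2 (fun q1 q2 => y - q2 - 1 <= x - q1 <= y - q2) qs1 qs2 ->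
  svt_cond_prob t lam qs1 x 0 o <= exp (1 / lam) * svt_cond_prob t lam qs2 y 0 o.
Proof.
  intros H.
  assert (Ht : INR t <> 0) by (intros E; rewrite E, Rmult_0_l in tlam_pos; lra).
  replace (exp (1 / lam)) with (exp (1 / (INR t * lam)) ^ (t - 0)).
  - apply svt_cond_prob_le_pow; [assumption |].
    destruct t; [contradiction | lia].
  - rewrite Nat.sub_0_r, exp_pow; f_equal; field.
    split; [| assumption]. intros E; rewrite E, Rmult_0_r in tlam_pos; lra.
Qed.

End ConditionalOutputProbability.

Lemma svt_prob_exists {A : Type} (D : list A) Q theta lam t o :
  0 < lam -> 0 < INR t * lam -> exists p, svt_prob D Q theta lam t o p.
Proof.
  intros Hl Htl.
  set (qs := map (fun p => counting_query p D) Q).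
  assert (Hg : forall z, 0 <= svt_cond_prob t lam qs (theta + z) 0 o <= 1)
    by (intros; apply svt_cond_prob_bounds; exact Htl).
  assert (Hc : forall z, continuous (fun z => svt_cond_prob t lam qs (theta + z) 0 o) z).
  { intros z; apply (continuous_comp (fun z => theta + z) (fun x => svt_cond_prob t lam qs x 0 o));
      [| apply continuous_svt_cond_prob].
    apply (continuous_plus (V := R_NormedModule)); [apply continuous_const | apply continuous_id]. }
  assert (Hf : forall z, 0 <= lap_pdf lam z * svt_cond_prob t lam qs (theta + z) 0 o
                         <= lap_pdf lam z)
    by (intros z; pose proof (lap_pdf_pos lam Hl z); pose proof (Hg z); nra).
  apply (improper_integral_nonneg_bounded _ 1).
  - intros a b; apply (ex_RInt_continuous (V := R_CompleteNormedModule)); intros z _.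
    apply (continuous_mult (K := R_AbsRing)); [apply continuous_lap_pdf | apply Hc].
  - intros z; apply Hf.
  - intros N HN; eapply Rle_trans; [| apply (RInt_lap_pdf_sym_le_1 lam Hl N HN)].
    apply RInt_le; [lra | | | intros z _; apply Hf];
      apply (ex_RInt_continuous (V := R_CompleteNormedModule)); intros z _.
    + apply (continuous_mult (K := R_AbsRing)); [apply continuous_lap_pdf | apply Hc].
    + apply continuous_lap_pdf.
Qed.

Lemma Permutation_filter_length {A : Type} (p : A -> bool) (l l' : list A) :
  Permutation l l' -> length (filter p l) = length (filter p l').
Proof.
  induction 1; simpl; auto; try congruence.
  - destruct (p x); simpl; auto.
  - destruct (p x), (p y); reflexivity.
Qed.

Lemma counting_query_perm_cons {A : Type} (p : A -> bool) (D D' : list A) x :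
  Permutation D (x :: D') ->
  counting_query p D' <= counting_query p D <= counting_query p D' + 1.
Proof.
  intros HP; unfold counting_query; rewrite (Permutation_filter_length p _ _ HP).
  cbn [filter]; destruct (p x); cbn [length]; [rewrite S_INR |]; lra.
Qed.

Lemma neighboring_counting_query_shift {A : Type} (D D' : list A) :
  neighboring D D' -> exists s, 0 <= s <= 1 /\ forall p,
    counting_query p D' - s <= counting_query p D <= counting_query p D' - s + 1.
Proof.
  intros [[x HP] | [x HP]]; [exists 0 | exists 1]; split; try lra; intros p;
    pose proof (counting_query_perm_cons p _ _ x HP); lra.
Qed.

Lemma Forall2_map_same {A B C : Type} (P : B -> C -> Prop) (f : A -> B) (g : A -> C) l :
  (forall a, P (f a) (g a)) -> Forall2 P (map f l) (map g l).
Proof. intros H; induction l; simpl; constructor; auto. Qed.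

Lemma Rdiv_le_swap a b c : 0 < a -> 0 < b -> a / b <= c -> a / c <= b.
Proof.
  intros Ha Hb H.
  assert (Hc : 0 < c) by (pose proof (Rdiv_lt_0_compat a b Ha Hb); lra).
  apply Rmult_le_reg_r with (c / b); [apply Rdiv_lt_0_compat; lra |].
  replace (a / c * (c / b)) with (a / b) by (field; lra).
  replace (b * (c / b)) with c by (field; lra); exact H.
Qed.


Theorem lemma6 (T : Type) (eps : R) (t : nat) (theta lam : R)
  (Q : list (T -> bool)) :
  0 < eps -> (0 < t)%nat -> 2 / eps <= lam ->
  svt_dp Q theta lam t eps.
Proof.
  intros Heps Ht Hlam D D' HDD' o.
  assert (Hbudget : 2 / lam <= eps) by (apply Rdiv_le_swap; lra).
  assert (Hl : 0 < lam) by (pose proof (Rdiv_lt_0_compat 2 eps ltac:(lra) Heps); lra).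
  assert (Htl : 0 < INR t * lam) by (apply Rmult_lt_0_compat; [apply lt_0_INR |]; assumption).
  destruct (svt_prob_exists D Q theta lam t o Hl Htl) as [p1 H1].
  destruct (svt_prob_exists D' Q theta lam t o Hl Htl) as [p2 H2].
  exists p1, p2; split; [exact H1 | split; [exact H2 |]].
  destruct (neighboring_counting_query_shift D D' HDD') as [s [Hs Hq]].
  apply (improper_integral_le _ _ _ _ _ (Rlt_le _ _ (exp_pos eps)) H1
           (improper_integral_shift _ _ s H2)); intros z; cbv beta.
  apply (Rmult_le_compat_factors _ _ _ _ (exp (Rabs s / lam)) (exp (1 / lam))).
  - left; apply lap_pdf_pos, Hl.
  - apply svt_cond_prob_bounds, Htl.
  - apply Rmult_le_pos; [left; apply lap_pdf_pos, Hl | apply svt_cond_prob_bounds, Htl].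
  - apply lap_pdf_shift_le, Hl.
  - apply svt_cond_prob_le; [exact Htl |].
    apply Forall2_map_same; intros p; specialize (Hq p); lra.
  - rewrite <- exp_plus; apply exp_le_exp.
    rewrite Rabs_right by lra.
    rewrite <- Rdiv_plus_distr.
    apply Rle_trans with (2 / lam); [apply Rdiv_le_mono; lra | exact Hbudget].
Qed.
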